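(* If $w\in S_n$ avoids the pattern $231$, then every permutation hop-equivalent to $w$ avoids $231$; that is, $P_w\subseteq S_n(231)$. Equivalently, if $w$ contains $231$ then $H_s(w)$ contains $231$ for every $s\in F(w)$.
   Context: A permutation $w\in S_n$ contains $231$ if there are indices $i<j<k$ with $w(k)<w(i)<w(j)$, and avoids $231$ otherwise; $S_n(231)$ is the set of $231$-avoiding permutations. For $w=w(1)\cdots w(n)$ set $w(0)=w(n+1)=\infty$. A letter $w(i)$, $1\le i\le n$, is free if $w(i-1)<w(i)<w(i+1)$ (upslope) or $w(i-1)>w(i)>w(i+1)$ (downslope); $F(w)$ is the set of free letters. For $j=w(i)\in F(w)$ define $H_j(w)$: if $j$ is on a downslope, take the smallest $k>i$ with $w(k)<j<w(k+1)$ and let $H_j(w)=w(1)\cdots w(i-1)w(i+1)\cdots w(k)\,j\,w(k+1)\cdots w(n)$; if $j$ is on an upslope, take the largest $k<i$ with $w(k-1)>j>w(k)$ and let $H_j(w)=w(1)\cdots w(k-1)\,j\,w(k)\cdots w(i-1)w(i+1)\cdots w(n)$. Hop-equivalence is the equivalence relation generated by $w\sim H_j(w)$; $P_w$ is the class of $w$. *)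

(* Permutations of [n] are sequences w = w(1)...w(n) of nat
   (stored 0-indexed in a seq) that are rearrangements of 1..n. *)
From Stdlib Require Import Relations.
From mathcomp Require Import all_boot.
Set Implicit Arguments. Unset Strict Implicit. Unset Printing Implicit Defensive.

Definition is_perm (n : nat) (w : seq nat) : Prop := perm_eq w (iota 1 n).

Definition contains231 (w : seq nat) : Prop :=
  exists i j k, [/\ i < j, j < k, k < size w & nth 0 w k < nth 0 w i < nth 0 w j].
Definition avoids231 (w : seq nat) : Prop := ~ contains231 w.

(* 1-indexed letter w(i) for 1 <= i <= n, with w(0) = w(n+1) = "infinity";
   infinity is represented by n+1, which exceeds every letter of w ∈ S_n. *)
Definition wext (w : seq nat) (i : nat) : nat :=
  if (0 < i <= size w) then nth 0 w i.-1 else (size w).+1.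

Definition downslope (w : seq nat) (i : nat) : bool :=
  (wext w i.-1 > wext w i) && (wext w i > wext w i.+1).
Definition upslope (w : seq nat) (i : nat) : bool :=
  (wext w i.-1 < wext w i) && (wext w i < wext w i.+1).

Definition free_pos (w : seq nat) (i : nat) : bool :=
  (0 < i <= size w) && (upslope w i || downslope w i).

Definition rem_at (i : nat) (w : seq nat) : seq nat := take i w ++ drop i.+1 w.
Definition ins_at (k : nat) (x : nat) (w : seq nat) : seq nat := take k w ++ x :: drop k w.

Definition hop_down_target (w : seq nat) (i k : nat) : Prop :=
  [/\ i < k <= size w, wext w k < wext w i < wext w k.+1 &
      forall k', i < k' < k -> ~~ (wext w k' < wext w i < wext w k'.+1)].

Definition hop_up_target (w : seq nat) (i k : nat) : Prop :=
  [/\ 0 < k < i, wext w i < wext w k.-1 & wext w k < wext w i] /\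
  (forall k', k < k' < i -> ~~ ((wext w k' < wext w i) && (wext w i < wext w k'.-1))).

(* In both cases H_j(w) is obtained
   by deleting w(i) and re-inserting it so that it ends up between the
   original w(k) and w(k+1) (downslope) resp. w(k-1) and w(k) (upslope);
   in 0-based terms this is insertion at index k-1 of the shortened word. *)
Definition hop (w v : seq nat) : Prop :=
  exists i k,
    0 < i <= size w /\
    ((downslope w i /\ hop_down_target w i k) \/
     (upslope w i /\ hop_up_target w i k)) /\
    v = ins_at k.-1 (wext w i) (rem_at i.-1 w).

Definition hop_equiv : relation (seq nat) := clos_refl_sym_trans (seq nat) hop.

From Stdlib Require Import Relations.
From mathcomp Require Import all_boot.
From mathcomp Require Import zify.
Set Implicit Arguments. Unset Strict Implicit. Unset Printing Implicit Defensive.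

(* Whether j = w(i) is on a downslope or on an upslope, the letters it hops
   over form a contiguous block B of letters smaller than j, and the letters
   bordering the move (the last letter before it, the first letter after it)
   are larger than j or do not exist.  So every hop, read in one direction or
   the other, is a "slide"
        A ++ j :: B ++ C   ~>   A ++ B ++ j :: C,   B < j < last A, head C.
   The heart of the proof is that a slide of a duplicate-free word preserves
   containment of 231 in both directions: the only occurrence it can destroy
   has the shape x j b with x in A, b in B and is replaced by x (last A) b;
   the only one it can create has the shape b j z with b in B, z in C, which
   already occurs as b (head C) z. *)

(* For a duplicate-free word, a 231 occurrence can be described by its
   letters, positions being recovered by [index]. *)
Definition pattern231 (s : seq nat) : Prop :=
  exists x y z : nat,
    [/\ x \in s, y \in s, z \in s, index x s < index y s & index y s < index z s]
    /\ z < x < y.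

Lemma contains231_pattern (s : seq nat) : uniq s -> contains231 s <-> pattern231 s.
Proof.
move=> us; split.
- case=> i [j [k [ij jk ks /andP[ki ij']]]].
  have ? : j < size s by apply: ltn_trans ks.
  have ? : i < size s by apply: ltn_trans ij _.
  exists (nth 0 s i), (nth 0 s j), (nth 0 s k).
  by rewrite !index_uniq // !mem_nth // ki ij'.
- case=> x [y [z [[xs ys zs ixy iyz] /andP[zx xy]]]].
  exists (index x s), (index y s), (index z s).
  by rewrite !nth_index // index_mem zx xy.
Qed.

Section Slide.
Variables (A B C : seq nat) (j : nat).
Let X := A ++ j :: B ++ C.
Let Y := A ++ B ++ j :: C.
Hypothesis uniqX : uniq X.
Hypothesis B_lt : all (fun b => b < j) B.
Hypothesis A_border : A = [::] \/ j < last 0 A.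
Hypothesis C_border : C = [::] \/ j < head 0 C.

Lemma perm_slide : perm_eq X Y.
Proof. by rewrite /X /Y perm_cat2l -cat1s perm_catCA. Qed.

Lemma mem_slide (u : nat) : (u \in X) = (u \in Y).
Proof. exact: (perm_mem perm_slide u). Qed.

Lemma uniq_slide : uniq Y.
Proof. by rewrite -(perm_uniq perm_slide). Qed.

Lemma lt_block (b : nat) : b \in B -> b < j.
Proof. by move/allP: B_lt; apply. Qed.

Lemma slide_disjoint :
  [/\ j \notin A, j \notin B, j \notin C,
      forall u, u \in A -> (u \notin B) && (u \notin C) &
      forall u, u \in B -> u \notin C].
Proof.
move: uniqX; rewrite /X cat_uniq /= cat_uniq mem_cat.
move=> /andP[_ /andP[/norP[jA hasA] /andP[/norP[jB jC] /andP[_ /andP[hasB _]]]]].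
split=> // u uA.
- by rewrite -negb_or -mem_cat; apply: contra hasA => uBC; apply/hasP; exists u.
- by apply: contra hasB => uC; apply/hasP; exists u.
Qed.

Lemma index_A (u : nat) : u \in A ->
  [/\ index u X = index u A, index u Y = index u A & index u A < size A].
Proof. by move=> uA; rewrite /X /Y !index_cat uA index_mem. Qed.

Lemma index_j : index j X = size A /\ index j Y = size A + size B.
Proof.
case: slide_disjoint => jA jB _ _ _.
by rewrite /X /Y !index_cat (negbTE jA) (negbTE jB) /= eqxx !addn0.
Qed.

Lemma index_B (u : nat) : u \in B ->
  [/\ index u X = size A + (index u B).+1, index u Y = size A + index u B
    & index u B < size B].
Proof.
case: slide_disjoint => _ jB _ dA _ uB.
have uA : u \notin A by apply/negP => /dA; rewrite uB.
have ju : j != u by apply: contraNneq jB => ->.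
by rewrite /X /Y !index_cat (negbTE uA) /= (negbTE ju) index_cat uB index_mem.
Qed.

Lemma index_C (u : nat) : u \in C ->
  index u X = size A + (size B + index u C).+1 /\
  index u Y = size A + (size B + index u C).+1.
Proof.
case: slide_disjoint => _ _ jC dA dB uC.
have uA : u \notin A by apply/negP => /dA; rewrite uC andbF.
have uB : u \notin B by apply/negP => /dB; rewrite uC.
have ju : j != u by apply: contraNneq jC => ->.
rewrite /X /Y !index_cat (negbTE uA) /= (negbTE ju) !index_cat (negbTE uB) /=.
by rewrite !addnS.
Qed.

Lemma slide_region (u : nat) : u \in X ->
  [\/ u \in A /\ [/\ index u X = index u A, index u Y = index u A & index u A < size A],
      u = j,
      u \in B /\ [/\ index u X = size A + (index u B).+1, index u Y = size A + index u B,
                     index u B < size B & u < j] |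
      u \in C /\ (index u X = size A + (size B + index u C).+1 /\
                  index u Y = size A + (size B + index u C).+1)].
Proof.
rewrite /X mem_cat inE mem_cat => /or4P[uA|/eqP ->|uB|uC].
- by apply: Or41; split=> //; apply: index_A.
- exact: Or42.
- by apply: Or43; split=> //; case: (index_B uB) => -> -> ->; rewrite lt_block.
- by apply: Or44; split=> //; apply: index_C.
Qed.

Lemma slide_order_XY (u v : nat) : u \in X -> v \in X ->
  index u X < index v X -> index u Y < index v Y \/ (u = j /\ v \in B).
Proof.
move=> uX vX lt_uv; have [jX jY] := index_j.
case: (slide_region uX) => [[uA [? ? ?]]|uj|[uB [? ? ? ?]]|[uC [? ?]]];
case: (slide_region vX) => [[vA [? ? ?]]|vj|[vB [? ? ? ?]]|[vC [? ?]]];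
  subst; try (by right); left; lia.
Qed.

Lemma slide_order_YX (u v : nat) : u \in X -> v \in X ->
  index u Y < index v Y -> index u X < index v X \/ (u \in B /\ v = j).
Proof.
move=> uX vX lt_uv; have [jX jY] := index_j.
case: (slide_region uX) => [[uA [? ? ?]]|uj|[uB [? ? ? ?]]|[uC [? ?]]];
case: (slide_region vX) => [[vA [? ? ?]]|vj|[vB [? ? ? ?]]|[vC [? ?]]];
  subst; try (by right); left; lia.
Qed.

(* An occurrence x j z of X with x in A, z in B is lost by the slide, but
   then x (last A) z is an occurrence in Y, since x < j < last A. *)
Lemma slide_pattern_Y (x z : nat) : x \in A -> z \in B -> z < x < j -> pattern231 Y.
Proof.
move=> xA zB /andP[zx xj].
have An : A != [::] by apply: contraTneq xA => ->.
have ja : j < last 0 A by case: A_border => // /eqP; rewrite (negbTE An).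
have size_A : 0 < size A by rewrite lt0n size_eq0.
have aA : last 0 A \in A by rewrite -nth_last mem_nth // prednK.
have uA : uniq A by move: uniqX; rewrite /X cat_uniq => /and3P[].
have ia : index (last 0 A) A = (size A).-1 by rewrite -nth_last index_uniq // prednK.
have xa : index x A != (size A).-1.
  by apply: contraTneq xj => e; rewrite -(nth_index 0 xA) e nth_last -leqNgt ltnW.
have [ix1 ix2 ix3] := index_A xA; have [ia1 ia2 ia3] := index_A aA.
have [iz1 iz2 iz3] := index_B zB.
exists x, (last 0 A), z; split; last by apply/andP; split; lia.
by split; [..| lia | lia]; rewrite -mem_slide /X !mem_cat inE ?mem_cat ?xA ?aA ?zB ?orbT.
Qed.

(* An occurrence x j z of Y with x in B, z in C is new, but then
   x (head C) z is already an occurrence in X, since j < head C. *)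
Lemma slide_pattern_X (x z : nat) : x \in B -> z \in C -> z < x -> pattern231 X.
Proof.
move=> xB zC zx; have xj := lt_block xB.
have Cn : C != [::] by apply: contraTneq zC => ->.
have jc : j < head 0 C by case: C_border => // /eqP; rewrite (negbTE Cn).
have cC : head 0 C \in C by rewrite -nth0 mem_nth // lt0n size_eq0.
have ic : index (head 0 C) C = 0 by case: (C) Cn => //= c s _; rewrite eqxx.
have zc : z != head 0 C by rewrite ltn_eqF //; lia.
have iz : index z C != 0 by move: zc Cn; case: (C) => //= c s; rewrite eq_sym => /negbTE ->.
have [ix1 ix2 ix3] := index_B xB; have [iz1 iz2] := index_C zC.
have [ic1 ic2] := index_C cC.
exists x, (head 0 C), z; split; last by apply/andP; split; lia.
by split; [..| lia | lia]; rewrite /X !mem_cat inE ?mem_cat ?xB ?zC ?cC ?orbT.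
Qed.

Lemma slide_pattern231 : pattern231 X <-> pattern231 Y.
Proof.
have [jX jY] := index_j.
split; case=> x [y [z [[xX yX zX ixy iyz] /andP[zx xy]]]].
- case: (slide_order_XY xX yX ixy) => [ixy'|[xj yB]]; last first.
    by move: (lt_block yB); lia.
  case: (slide_order_XY yX zX iyz) => [iyz'|[yj zB]].
    by exists x, y, z; split; [split; rewrite -?mem_slide | apply/andP].
  subst y; case: (slide_region xX) => [[xA _]|?|[? [? ? ? ?]]|[? [? ?]]]; try lia.
  by apply: (slide_pattern_Y xA zB); lia.
- rewrite -!mem_slide in xX yX zX.
  case: (slide_order_YX yX zX iyz) => [iyz'|[yB zj]]; last first.
    by move: (lt_block yB); lia.
  case: (slide_order_YX xX yX ixy) => [ixy'|[xB yj]].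
    by exists x, y, z; split; [split | apply/andP].
  subst y; case: (slide_region zX) => [[? [? ? ?]]|?|[? [? ? ? ?]]|[zC _]]; try lia.
  by apply: (slide_pattern_X xB zC).
Qed.

End Slide.

Definition slide (w v : seq nat) : Prop :=
  exists (A B C : seq nat) (j : nat),
    [/\ all (fun b => b < j) B, A = [::] \/ j < last 0 A, C = [::] \/ j < head 0 C,
        w = A ++ j :: B ++ C & v = A ++ B ++ j :: C].

Lemma slide_contains231 (w v : seq nat) : uniq w -> slide w v ->
  contains231 w <-> contains231 v.
Proof.
move=> uw [A [B [C [j [B_lt A_border C_border ew ev]]]]]; subst w v.
have uv : uniq (A ++ B ++ j :: C) by apply: uniq_slide.
have key := slide_pattern231 uw B_lt A_border C_border.
split=> [/(contains231_pattern uw)/key | /(contains231_pattern uv)/key];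
  by move/contains231_pattern; apply.
Qed.

Lemma wextS (w : seq nat) (p : nat) : p < size w -> wext w p.+1 = nth 0 w p.
Proof. by move=> hp; rewrite /wext /= hp. Qed.

Lemma wext_inj (w : seq nat) (p q : nat) : uniq w ->
  0 < p <= size w -> 0 < q <= size w -> wext w p = wext w q -> p = q.
Proof.
case: p q => [|p] [|q] // uw hp hq; rewrite !wextS // => e.
by congr _.+1; apply/eqP; rewrite -(nth_uniq 0 hp hq uw) e.
Qed.

Lemma drop_wext (w : seq nat) (p : nat) : 0 < p <= size w ->
  drop p.-1 w = wext w p :: drop p w.
Proof. by case: p => // p hp; rewrite wextS //; apply: drop_nth. Qed.

Lemma take_border (w : seq nat) (p j : nat) : p <= size w -> j < wext w p ->
  take p w = [::] \/ j < last 0 (take p w).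
Proof.
case: p => [|p] hp hj; first by left; rewrite take0.
by right; rewrite -nth_last size_takel //= nth_take // -wextS.
Qed.

Lemma drop_border (w : seq nat) (p j : nat) : j < wext w p.+1 ->
  drop p w = [::] \/ j < head 0 (drop p w).
Proof.
case: (ltnP p (size w)) => hp hj; last by left; apply: drop_oversize.
by right; rewrite -nth0 nth_drop addn0 -wextS.
Qed.

Lemma drop_block (w : seq nat) (lo hi : nat) : lo <= hi ->
  drop lo w = take (hi - lo) (drop lo w) ++ drop hi w.
Proof.
by move=> le_lh; rewrite -{1}(cat_take_drop (hi - lo) (drop lo w)) drop_drop subnK.
Qed.

Lemma all_block (w : seq nat) (lo hi : nat) (P : pred nat) : hi <= size w ->
  (forall p, lo < p <= hi -> P (wext w p)) -> all P (take (hi - lo) (drop lo w)).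
Proof.
move=> hs hP; apply/(all_nthP 0) => m; rewrite size_take_min size_drop => hm.
by rewrite nth_take ?nth_drop -?wextS; [apply: hP | ..]; lia.
Qed.

Lemma chain_up (Q : nat -> Prop) (lo hi : nat) : Q lo.+1 ->
  (forall p, lo < p < hi -> Q p -> Q p.+1) -> forall p, lo < p <= hi -> Q p.
Proof.
move=> Qlo step; elim=> [|p IH] // hp.
have [<- // | ne_lo_p] := eqVneq lo p.
by apply: step; [lia | apply: IH; lia].
Qed.

Lemma chain_down (Q : nat -> Prop) (lo hi : nat) : Q hi.-1 ->
  (forall p, lo < p < hi -> Q p -> Q p.-1) -> forall p, lo <= p < hi -> Q p.
Proof.
move=> Qhi step.
suff Qd : forall d, d < hi - lo -> Q (hi.-1 - d).
  move=> p hp; have := Qd (hi.-1 - p).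
  by rewrite (_ : hi.-1 - (hi.-1 - p) = p); [apply; lia | lia].
elim=> [|d IH] hd; first by rewrite subn0.
have -> : hi.-1 - d.+1 = (hi.-1 - d).-1 by lia.
by apply: step; [lia | apply: IH; lia].
Qed.

Lemma rem_at_cat (s t : seq nat) (x : nat) : rem_at (size s) (s ++ x :: t) = s ++ t.
Proof. by rewrite /rem_at take_size_cat // -cat_rcons drop_size_cat ?size_rcons. Qed.

Lemma ins_at_cat (s t : seq nat) (x : nat) : ins_at (size s) x (s ++ t) = s ++ x :: t.
Proof. by rewrite /ins_at take_size_cat // drop_size_cat. Qed.

(* A downslope hop of j = w(i) to between w(k) and w(k+1) slides j over the
   block w(i+1) .. w(k): by minimality of k these letters are all below j,
   and w(i-1), w(k+1) are above j. *)
Lemma downhop_slide (w : seq nat) (i k : nat) : uniq w -> 0 < i <= size w ->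
  downslope w i -> hop_down_target w i k ->
  slide w (ins_at k.-1 (wext w i) (rem_at i.-1 w)).
Proof.
move=> uw hi; rewrite /downslope /hop_down_target.
have split_i := drop_wext hi.
move Ej: (wext w i) split_i => j split_i /andP[left_gt next_lt]
  [/andP[lt_ik k_le] /andP[_ right_gt] first_k].
(* if w(p) < j then w(p+1) < j, for otherwise p would be a smaller target *)
have below : forall p, i < p <= k -> wext w p < j.
  apply: chain_up => // p hp lt_pj; apply: contraTT (first_k p hp).
  rewrite -leqNgt leq_eqVlt lt_pj negbK => /orP[/eqP e | -> //].
  have p_pos : 0 < p.+1 <= size w by lia.
  by rewrite -Ej in e; move: (wext_inj uw hi p_pos e); lia.
pose A := take i.-1 w; pose B := take (k - i) (drop i w); pose C := drop k w.
have eA : size A = i.-1 by rewrite size_takel //; lia.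
have eB : size B = k - i by rewrite size_takel // size_drop; lia.
have ew : w = A ++ j :: B ++ C.
  by rewrite /A /B /C -drop_block -?split_i ?cat_take_drop //; lia.
exists A, B, C, j; split.
- exact: (all_block (P := fun b => b < j)).
- by apply: take_border; lia.
- exact: drop_border.
- exact: ew.
- rewrite [in rem_at _ w]ew -eA rem_at_cat.
  have -> : k.-1 = size (A ++ B) by rewrite size_cat; lia.
  by rewrite catA ins_at_cat -catA.
Qed.

(* An upslope hop of j = w(i) to between w(k-1) and w(k) slides j leftwards
   over the block w(k) .. w(i-1): by maximality of k these letters are all
   below j, and w(k-1), w(i+1) are above j. *)
Lemma uphop_slide (w : seq nat) (i k : nat) : uniq w -> 0 < i <= size w ->
  upslope w i -> hop_up_target w i k ->
  slide (ins_at k.-1 (wext w i) (rem_at i.-1 w)) w.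
Proof.
move=> uw hi; rewrite /upslope /hop_up_target.
have split_i := drop_wext hi.
move Ej: (wext w i) split_i => j split_i /andP[prev_lt right_gt]
  [[/andP[k_pos lt_ki] left_gt _] last_k].
(* if w(p) < j then w(p-1) < j, for otherwise p would be a larger target *)
have below : forall p, k <= p < i -> wext w p < j.
  apply: chain_down => // p hp lt_pj; apply: contraTT (last_k p hp).
  rewrite -leqNgt leq_eqVlt lt_pj negbK => /orP[/eqP e | -> //].
  have p_pos : 0 < p.-1 <= size w by lia.
  by rewrite -Ej in e; move: (wext_inj uw hi p_pos e); lia.
pose A := take k.-1 w; pose B := take (i.-1 - k.-1) (drop k.-1 w); pose C := drop i w.
have eA : size A = k.-1 by rewrite size_takel //; lia.
have eB : size B = i.-1 - k.-1 by rewrite size_takel // size_drop; lia.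
have ew : w = A ++ B ++ j :: C.
  by rewrite /A /B /C -split_i -drop_block ?cat_take_drop //; lia.
exists A, B, C, j; split.
- by apply: (all_block (P := fun b => b < j)) => [|p hp]; [lia | apply: below; lia].
- by apply: take_border; lia.
- exact: drop_border.
- rewrite [in rem_at _ w]ew catA.
  have -> : i.-1 = size (A ++ B) by rewrite size_cat; lia.
  by rewrite rem_at_cat -eA -catA ins_at_cat.
- exact: ew.
Qed.

Lemma hop_slide (w v : seq nat) : uniq w -> hop w v -> slide w v \/ slide v w.
Proof.
move=> uw [i [k [hi [[[down target] | [up target]] ->]]]].
- by left; apply: downhop_slide.
- by right; apply: uphop_slide.
Qed.

Lemma perm_rem_at (w : seq nat) (i : nat) : 0 < i <= size w ->
  perm_eq w (wext w i :: rem_at i.-1 w).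
Proof.
move=> hi; rewrite /rem_at prednK; last lia.
by rewrite -{1}(cat_take_drop i.-1 w) drop_wext // -cat1s perm_catCA.
Qed.

Lemma perm_ins_at (k x : nat) (s : seq nat) : perm_eq (ins_at k x s) (x :: s).
Proof. by rewrite /ins_at -cat1s perm_catCA cat_take_drop. Qed.

Lemma hop_perm (w v : seq nat) : hop w v -> perm_eq w v.
Proof.
case=> i [k [hi [_ ->]]].
by apply: perm_trans (perm_rem_at hi) _; rewrite perm_sym perm_ins_at.
Qed.

Lemma hop_equiv_invariant (w v : seq nat) : hop_equiv w v ->
  perm_eq w v /\ (uniq w -> (contains231 w <-> contains231 v)).
Proof.
elim=> {w v} [x y xy | x | x y _ [pxy IH] | x y z _ [pxy IHxy] _ [pyz IHyz]].
- split=> [|ux]; first exact: hop_perm.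
  have [sl | sl] := hop_slide ux xy; first exact: slide_contains231.
  by symmetry; apply: slide_contains231 sl; rewrite -(perm_uniq (hop_perm xy)).
- by [].
- split=> [|uy]; first by rewrite perm_sym.
  by symmetry; apply: IH; rewrite (perm_uniq pxy).
- split=> [|ux]; first exact: perm_trans pxy pyz.
  by rewrite (IHxy ux); apply: IHyz; rewrite -(perm_uniq pxy).
Qed.

Theorem mainTheorem15 (n : nat) (w v : seq nat) :
  is_perm n w -> avoids231 w -> hop_equiv w v -> is_perm n v /\ avoids231 v.
Proof.
move=> perm_w avoid_w /hop_equiv_invariant [pwv same231].
have uw : uniq w by rewrite (perm_uniq perm_w) iota_uniq.
split; first by apply: perm_trans perm_w; rewrite perm_sym.
by rewrite /avoids231 -(same231 uw).
Qed.
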